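(* There exists $(\alpha_n(0))_{n\geq0}\in\mathbb{D}^\infty$ such that, for the solution $\alpha_n(t)$ of the Schur flow $\alpha_n'(t)=(1-|\alpha_n(t)|^2)(\alpha_{n+1}(t)-\alpha_{n-1}(t))$, $n\geq0$, $\alpha_{-1}\equiv-1$, with these initial conditions, $\alpha_0(t)$ does not have a limit as $t\to\infty$.
   Context: $\mathbb{D}=\{z\in\mathbb{C}:|z|<1\}$. For initial data in $\mathbb{D}^\infty$ the Schur flow has a unique global solution with values in $\mathbb{D}$; it is given by $\alpha_n(t)=\alpha_n(\mu_t)$, where $\mu$ is the probability measure on the unit circle with Verblunsky coefficients $\alpha_n(\mu)=\alpha_n(0)$ and $d\mu_t(\theta)=e^{2t\cos\theta}d\mu(\theta)/\int e^{2t\cos\theta}d\mu(\theta)$. *)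

From Stdlib Require Import Reals.
From Coquelicot Require Import Coquelicot.
Open Scope R_scope.

Definition in_disk (z : C) : Prop := Cmod z < 1.

Definition alpha_prev (a : nat -> R -> C) (n : nat) (t : R) : C :=
  match n with
  | O => RtoC (-1)
  | S m => a m t
  end.

Definition schur_flow_solution (a0 : nat -> C) (a : nat -> R -> C) : Prop :=
  (forall n t, in_disk (a n t)) /\
  (forall n, a n 0 = a0 n) /\
  (forall n t, is_derive (a n) t
      (Cmult (RtoC (1 - Cmod (a n t) ^ 2)) (Cminus (a (S n) t) (alpha_prev a n t)))).

(* If the moments T_ab = ∫ z^a conj(z)^b dμ_t evolve as those of
   μ_t = e^(2t cos θ) μ / ∫ e^(2t cos θ) dμ, namely
   dT_ab/dt = T_(a+1)b + T_a(b+1) - T_ab (T_10 + T_01), then differentiating the Szegő recursion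
   shows that the Verblunsky coefficients of μ_t solve the Schur flow.  Take
   μ = Σ_k e^(-15k) δ_(ζ_k) with ζ_k = -2^-k + i (-1)^k sqrt(1 - 4^-k).  At time t_j = 10·2^j the
   factor e^(2t cos θ) = e^(-2t 2^-k) makes ζ_j carry almost all the mass, so
   α_0(t_j) = conj (∫ z dμ_(t_j)) has imaginary part of sign -(-1)^j and size at least 1/2.
   Solutions are unique forward in time (Picard iteration for the uniformly Lipschitz infinite
   system), so every solution with these initial data oscillates. *)

From Stdlib Require Import Reals Lra Lia Classical.
From Coquelicot Require Import Coquelicot.
Open Scope R_scope.

Lemma im_le_Cmod (c : C) : Rabs (Im c) <= Cmod c.
Proof.
  destruct c as [a b]. unfold Cmod, Im; simpl. rewrite <- sqrt_Rsqr_abs.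
  apply sqrt_le_1_alt. unfold Rsqr. nra.
Qed.

Lemma is_linear_Re : is_linear (U := C_R_NormedModule) (V := R_NormedModule) Re.
Proof.
  split; [intros [a b] [c d]; reflexivity | intros k [a b]; reflexivity |].
  exists 1; split; [lra|]. intros z. rewrite Rmult_1_l, <- Cmod_norm. apply re_le_Cmod.
Qed.

Lemma is_linear_Im : is_linear (U := C_R_NormedModule) (V := R_NormedModule) Im.
Proof.
  split; [intros [a b] [c d]; reflexivity | intros k [a b]; reflexivity |].
  exists 1; split; [lra|]. intros z. rewrite Rmult_1_l, <- Cmod_norm. apply im_le_Cmod.
Qed.

Lemma is_derive_Re (f : R -> C) x l :
  is_derive f x l -> is_derive (fun t => Re (f t)) x (Re l).
Proof.
  intros H. eapply filterdiff_ext_lin.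
  - apply (filterdiff_comp' f Re x _ Re H), filterdiff_linear, is_linear_Re.
  - reflexivity.
Qed.

Lemma is_derive_Im (f : R -> C) x l :
  is_derive f x l -> is_derive (fun t => Im (f t)) x (Im l).
Proof.
  intros H. eapply filterdiff_ext_lin.
  - apply (filterdiff_comp' f Im x _ Im H), filterdiff_linear, is_linear_Im.
  - reflexivity.
Qed.

Lemma is_derive_eq {V : NormedModule R_AbsRing} (f g : R -> V) x l l' :
  is_derive f x l -> (forall t, f t = g t) -> l = l' -> is_derive g x l'.
Proof. intros H E <-. exact (is_derive_ext f g x l E H). Qed.

Lemma is_derive_Re_Im (f : R -> C) x l :
  is_derive (fun t => Re (f t)) x (Re l) -> is_derive (fun t => Im (f t)) x (Im l) ->
  is_derive f x l.
Proof.
  intros H1 H2.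
  assert (H := is_derive_plus _ _ x _ _
     (@is_derive_scal_l R_AbsRing C_R_NormedModule _ x _ (RtoC 1) H1)
     (@is_derive_scal_l R_AbsRing C_R_NormedModule _ x _ Ci H2)).
  eapply is_derive_eq; [exact H | intros t |];
    unfold plus, scal; cbn; unfold prod_plus, prod_scal, Re, Im; cbn;
    unfold plus, scal; cbn; unfold mult; cbn; apply injective_projections; cbn; ring.
Qed.

Lemma is_derive_Cconst (c : C) x : is_derive (fun _ : R => c) x (RtoC 0).
Proof. apply is_derive_Re_Im; apply (is_derive_const (K := R_AbsRing) (V := R_NormedModule)). Qed.

Lemma is_derive_Cplus (f g : R -> C) x df dg :
  is_derive f x df -> is_derive g x dg -> is_derive (fun t => f t + g t)%C x (df + dg)%C.
Proof.
  intros H1 H2. apply is_derive_Re_Im.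
  - apply (is_derive_plus _ _ x _ _ (is_derive_Re _ _ _ H1) (is_derive_Re _ _ _ H2)).
  - apply (is_derive_plus _ _ x _ _ (is_derive_Im _ _ _ H1) (is_derive_Im _ _ _ H2)).
Qed.

Lemma is_derive_Copp (f : R -> C) x df :
  is_derive f x df -> is_derive (fun t => - f t)%C x (- df)%C.
Proof.
  intros H. apply is_derive_Re_Im.
  - apply (is_derive_opp _ x _ (is_derive_Re _ _ _ H)).
  - apply (is_derive_opp _ x _ (is_derive_Im _ _ _ H)).
Qed.

Lemma is_derive_Cminus (f g : R -> C) x df dg :
  is_derive f x df -> is_derive g x dg -> is_derive (fun t => f t - g t)%C x (df - dg)%C.
Proof. intros H1 H2. apply is_derive_Cplus; [exact H1 | apply is_derive_Copp, H2]. Qed.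

Lemma is_derive_Cconj (f : R -> C) x df :
  is_derive f x df -> is_derive (fun t => Cconj (f t)) x (Cconj df).
Proof.
  intros H. apply is_derive_Re_Im.
  - apply (is_derive_Re _ _ _ H).
  - apply (is_derive_opp _ x _ (is_derive_Im _ _ _ H)).
Qed.

Lemma is_derive_Rmult (f g : R -> R) x df dg :
  is_derive f x df -> is_derive g x dg -> is_derive (fun t => f t * g t) x (df * g x + f x * dg).
Proof. intros H1 H2. apply (is_derive_mult f g x df dg H1 H2), Rmult_comm. Qed.

Lemma is_derive_Cmult (f g : R -> C) x df dg :
  is_derive f x df -> is_derive g x dg ->
  is_derive (fun t => f t * g t)%C x (df * g x + f x * dg)%C.
Proof.
  intros H1 H2.
  pose proof (is_derive_Re _ _ _ H1) as A1. pose proof (is_derive_Im _ _ _ H1) as B1.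
  pose proof (is_derive_Re _ _ _ H2) as A2. pose proof (is_derive_Im _ _ _ H2) as B2.
  apply is_derive_Re_Im.
  - eapply is_derive_eq.
    + apply (is_derive_minus _ _ x _ _ (is_derive_Rmult _ _ _ _ _ A1 A2) (is_derive_Rmult _ _ _ _ _ B1 B2)).
    + reflexivity.
    + destruct df, dg, (f x), (g x); cbn; unfold Re, Im; cbn; ring.
  - eapply is_derive_eq.
    + apply (is_derive_plus _ _ x _ _ (is_derive_Rmult _ _ _ _ _ A1 B2) (is_derive_Rmult _ _ _ _ _ B1 A2)).
    + reflexivity.
    + destruct df, dg, (f x), (g x); cbn; unfold Re, Im; cbn; ring.
Qed.

Lemma is_derive_RtoC (h : R -> R) x dh :
  is_derive h x dh -> is_derive (fun t => RtoC (h t)) x (RtoC dh).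
Proof.
  intros H. apply is_derive_Re_Im; [exact H |].
  eapply is_derive_eq; [apply (is_derive_const (K := R_AbsRing) (V := R_NormedModule) 0) | |];
    reflexivity.
Qed.

Lemma is_derive_Cinv (f : R -> C) x df :
  is_derive f x df -> f x <> RtoC 0 -> is_derive (fun t => / f t)%C x (- (df / (f x * f x)))%C.
Proof.
  intros H Hx.
  pose proof (is_derive_Re _ _ _ H) as A. pose proof (is_derive_Im _ _ _ H) as B.
  set (D t := Re (f t) ^ 2 + Im (f t) ^ 2).
  assert (HD0 : D x <> 0).
  { intros E. apply Hx. unfold D in E. destruct (f x) as [a b]; unfold Re, Im in E; cbn in E.
    apply injective_projections; cbn; nra. }
  assert (HD : is_derive D x (2 * Re (f x) * Re df + 2 * Im (f x) * Im df)).
  { eapply is_derive_eq.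
    - apply (is_derive_plus _ _ x _ _ (is_derive_Rmult _ _ _ _ _ A A) (is_derive_Rmult _ _ _ _ _ B B)).
    - intros t; unfold D; cbn; ring.
    - cbn; ring. }
  eapply is_derive_eq.
  - apply is_derive_Cmult; [apply is_derive_Cconj, H | apply is_derive_RtoC, (is_derive_inv _ _ _ HD HD0)].
  - intros t. unfold D, Cinv, Cconj, Cmult, Re, Im, Rdiv; cbn. apply injective_projections; cbn; ring.
  - unfold D in *. destruct df as [c d], (f x) as [a b]. unfold Re, Im in *; cbn in *.
    unfold Cdiv, Cinv, Cconj, Cmult, Copp, opp, mult, Rdiv; cbn.
    apply injective_projections; cbn; field; nra.
Qed.

Definition CDerive (f : R -> C) (t : R) : C :=
  (Derive (fun s => Re (f s)) t, Derive (fun s => Im (f s)) t).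

Lemma is_derive_CDerive (f : R -> C) t l : is_derive f t l -> CDerive f t = l.
Proof.
  intros H. destruct l as [l1 l2]. apply injective_projections; apply is_derive_unique.
  - apply (is_derive_Re _ _ _ H).
  - apply (is_derive_Im _ _ _ H).
Qed.

Lemma ex_derive_CDerive (f : R -> C) t : ex_derive f t -> is_derive f t (CDerive f t).
Proof. intros [l H]. rewrite (is_derive_CDerive _ _ _ H). exact H. Qed.

Lemma is_derive_Cconst_0 (f : R -> C) (c : C) t l :
  (forall s, f s = c) -> is_derive f t l -> l = RtoC 0.
Proof.
  intros Hf H. rewrite <- (is_derive_CDerive _ _ _ H).
  apply is_derive_CDerive. exact (is_derive_ext _ f t _ (fun s => eq_sym (Hf s)) (is_derive_Cconst c t)).
Qed.

Lemma ex_derive_Cconst (c : C) (t : R) : ex_derive (fun _ : R => c) t.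
Proof. eexists; apply is_derive_Cconst. Qed.

Lemma ex_derive_Cplus (f g : R -> C) (t : R) :
  ex_derive f t -> ex_derive g t -> ex_derive (fun s => f s + g s)%C t.
Proof. intros [l1 H1] [l2 H2]; eexists; apply is_derive_Cplus; eauto. Qed.

Lemma ex_derive_Cminus (f g : R -> C) (t : R) :
  ex_derive f t -> ex_derive g t -> ex_derive (fun s => f s - g s)%C t.
Proof. intros [l1 H1] [l2 H2]; eexists; apply is_derive_Cminus; eauto. Qed.

Lemma ex_derive_Cmult (f g : R -> C) (t : R) :
  ex_derive f t -> ex_derive g t -> ex_derive (fun s => f s * g s)%C t.
Proof. intros [l1 H1] [l2 H2]; eexists; apply is_derive_Cmult; eauto. Qed.

Lemma ex_derive_Cconj (f : R -> C) (t : R) : ex_derive f t -> ex_derive (fun s => Cconj (f s)) t.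
Proof. intros [l H]; eexists; apply is_derive_Cconj; eauto. Qed.

Lemma ex_derive_Cdiv (f g : R -> C) (t : R) :
  ex_derive f t -> ex_derive g t -> g t <> RtoC 0 -> ex_derive (fun s => f s / g s)%C t.
Proof.
  intros [l1 H1] [l2 H2] Hg. eexists.
  apply is_derive_Cmult; [exact H1 | apply is_derive_Cinv; eauto].
Qed.

Fixpoint csum (f : nat -> C) (n : nat) : C :=
  match n with O => RtoC 0 | S m => (csum f m + f m)%C end.

Section FiniteSums.
Local Open Scope C_scope.

Lemma Cconj_RtoC (x : R) : Cconj (RtoC x) = RtoC x.
Proof. apply injective_projections; cbn; ring. Qed.

Lemma csum_ext (f g : nat -> C) n : (forall a, (a < n)%nat -> f a = g a) -> csum f n = csum g n.
Proof.
  induction n; intros H; cbn; [reflexivity|].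
  rewrite IHn, H by (intros; try apply H; lia). reflexivity.
Qed.

Lemma csum_Sl (f : nat -> C) n : csum f (S n) = f 0%nat + csum (fun a => f (S a)) n.
Proof. induction n; cbn in *; [ring | rewrite IHn; ring]. Qed.

Lemma csum_plus (f g : nat -> C) n : csum (fun a => f a + g a) n = csum f n + csum g n.
Proof. induction n; cbn; [ring | rewrite IHn; ring]. Qed.

Lemma csum_minus (f g : nat -> C) n : csum (fun a => f a - g a) n = csum f n - csum g n.
Proof. induction n; cbn; [ring | rewrite IHn; ring]. Qed.

Lemma csum_mult_l (c : C) (f : nat -> C) n : csum (fun a => c * f a) n = c * csum f n.
Proof. induction n; cbn; [ring | rewrite IHn; ring]. Qed.

Lemma csum_conj (f : nat -> C) n : csum (fun a => Cconj (f a)) n = Cconj (csum f n).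
Proof.
  induction n; cbn; [symmetry; apply Cconj_RtoC |].
  rewrite IHn, Cplus_conj. reflexivity.
Qed.

Lemma csum_eq0 (f : nat -> C) n : (forall a, (a < n)%nat -> f a = 0) -> csum f n = 0.
Proof. induction n; intros H; cbn; [reflexivity|]. rewrite IHn, H by (intros; try apply H; lia). ring. Qed.

Lemma csum_rev (f : nat -> C) n : csum f n = csum (fun a => f (n - 1 - a)%nat) n.
Proof.
  induction n; [reflexivity|].
  rewrite (csum_Sl (fun a => f (S n - 1 - a)%nat)). cbn [csum]. rewrite IHn.
  replace (S n - 1 - 0)%nat with n by lia. rewrite Cplus_comm. f_equal.
  apply csum_ext. intros a Ha. f_equal. lia.
Qed.

Lemma csum_swap (f : nat -> nat -> C) n m :
  csum (fun a => csum (fun b => f a b) m) n = csum (fun b => csum (fun a => f a b) n) m.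
Proof.
  induction n; cbn.
  - symmetry; apply csum_eq0; reflexivity.
  - rewrite IHn, <- csum_plus. reflexivity.
Qed.

Lemma csum_single (f : nat -> C) n k :
  (k < n)%nat -> (forall a, (a < n)%nat -> a <> k -> f a = 0) -> csum f n = f k.
Proof.
  induction n; intros Hk H; [lia|]. cbn.
  destruct (Nat.eq_dec k n) as [->|Hne].
  - rewrite csum_eq0 by (intros; apply H; lia). ring.
  - rewrite IHn, (H n) by (try lia; intros; apply H; lia). ring.
Qed.

Lemma csum_mult (f g : nat -> C) n m : csum f n * csum g m = csum (fun b => csum (fun a => f a * g b) n) m.
Proof.
  rewrite <- csum_mult_l. apply csum_ext. intros b _.
  rewrite Cmult_comm, <- csum_mult_l. apply csum_ext. intros; ring.
Qed.

End FiniteSums.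

(** * Szegő recursion *)

Definition deg_le (d : nat) (p : nat -> C) : Prop := forall a, (d < a)%nat -> p a = RtoC 0.

Definition mulX (p : nat -> C) (a : nat) : C := match a with O => RtoC 0 | S b => p b end.

Definition reversed (d : nat) (p : nat -> C) (a : nat) : C :=
  if Nat.leb a d then Cconj (p (d - a)%nat) else RtoC 0.

Definition poly1 (a : nat) : C := if Nat.eqb a 0 then RtoC 1 else RtoC 0.

(* [T a b] stands for the moment <z^a, z^b> = ∫ z^a conj(z)^b dμ and [p : nat -> C] for the
   coefficients of a polynomial of degree at most [d]; [inner_pow T d p j] is then <p, z^j>. *)
Definition inner_pow (T : nat -> nat -> C) (d : nat) (p : nat -> C) (j : nat) : C :=
  csum (fun a => p a * T a j)%C (S d).

Definition inner (T : nat -> nat -> C) (d : nat) (p q : nat -> C) : C :=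
  csum (fun b => Cconj (q b) * inner_pow T d p b)%C (S d).

Definition toeplitz (T : nat -> nat -> C) : Prop := forall a b, T (S a) (S b) = T a b.
Definition hermitian (T : nat -> nat -> C) : Prop := forall a b, T b a = Cconj (T a b).
Definition positive_definite (T : nat -> nat -> C) : Prop :=
  forall d p, deg_le d p -> (exists a, p a <> RtoC 0) -> 0 < Re (inner T d p p).

(* Monic orthogonal polynomials: Φ_(n+1) = z Φ_n - conj(α_n) Φ_n^*, where
   conj(α_n) = <z Φ_n, 1> / <Φ_n, Φ_n> is [szego_coef T n]. *)
Fixpoint opuc (T : nat -> nat -> C) (n : nat) : nat -> C :=
  match n with
  | O => poly1
  | S m => let P := opuc T m in
      fun a => (mulX P a - inner_pow T (S m) (mulX P) 0 / inner_pow T m P m * reversed m P a)%C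
  end.

Definition opuc_norm2 (T : nat -> nat -> C) (n : nat) : C := inner_pow T n (opuc T n) n.

Definition szego_coef (T : nat -> nat -> C) (n : nat) : C :=
  (inner_pow T (S n) (mulX (opuc T n)) 0 / opuc_norm2 T n)%C.

Definition verblunsky (T : nat -> nat -> C) (n : nat) : C := Cconj (szego_coef T n).

Section InnerPow.
Local Open Scope C_scope.
Variable T : nat -> nat -> C.

Lemma inner_pow_ext d p q j :
  (forall a, (a <= d)%nat -> p a = q a) -> inner_pow T d p j = inner_pow T d q j.
Proof. intros H. apply csum_ext. intros a Ha. rewrite H by lia. reflexivity. Qed.

Lemma inner_pow_plus d p q j :
  inner_pow T d (fun a => p a + q a) j = inner_pow T d p j + inner_pow T d q j.
Proof. unfold inner_pow. rewrite <- csum_plus. apply csum_ext; intros; ring. Qed.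

Lemma inner_pow_scal d c p j : inner_pow T d (fun a => c * p a) j = c * inner_pow T d p j.
Proof. unfold inner_pow. rewrite <- csum_mult_l. apply csum_ext; intros; ring. Qed.

Lemma inner_pow_minus d p q j :
  inner_pow T d (fun a => p a - q a) j = inner_pow T d p j - inner_pow T d q j.
Proof. unfold inner_pow. rewrite <- csum_minus. apply csum_ext; intros; ring. Qed.

Lemma inner_pow_widen d d' p j :
  deg_le d p -> (d <= d')%nat -> inner_pow T d' p j = inner_pow T d p j.
Proof.
  intros Hd Hle. induction Hle as [|d' Hle IH]; [reflexivity|].
  unfold inner_pow in *. change (csum ?f (S (S d'))) with (csum f (S d') + f (S d'))%C.
  rewrite IH, Hd by lia. ring.
Qed.

Lemma deg_reversed d p : deg_le d (reversed d p).
Proof.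
  intros a Ha. unfold reversed.
  replace (Nat.leb a d) with false by (symmetry; apply Nat.leb_gt; lia). reflexivity.
Qed.

Hypothesis TS : toeplitz T.
Hypothesis TH : hermitian T.

Lemma toeplitz_add a b k : T (a + k)%nat (b + k)%nat = T a b.
Proof. induction k; [rewrite !Nat.add_0_r | rewrite !Nat.add_succ_r, TS]; auto. Qed.

Lemma inner_pow_mulX d p j : inner_pow T (S d) (mulX p) (S j) = inner_pow T d p j.
Proof.
  unfold inner_pow. rewrite csum_Sl. cbn [mulX]. rewrite Cmult_0_l, Cplus_0_l.
  apply csum_ext. intros a _. rewrite TS. reflexivity.
Qed.

Lemma inner_pow_mulX_0 d p : inner_pow T (S d) (mulX p) 0 = csum (fun a => p a * T (S a) 0%nat) (S d).
Proof. unfold inner_pow. rewrite csum_Sl. cbn [mulX]. rewrite Cmult_0_l, Cplus_0_l. reflexivity. Qed.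

Lemma inner_pow_reversed d p j :
  (j <= d)%nat -> inner_pow T d (reversed d p) j = Cconj (inner_pow T d p (d - j)).
Proof.
  intros Hj. unfold inner_pow. rewrite <- csum_conj, csum_rev. apply csum_ext. intros a Ha.
  unfold reversed. replace (Nat.leb (S d - 1 - a) d) with true by (symmetry; apply Nat.leb_le; lia).
  replace (d - (S d - 1 - a))%nat with a by lia. replace (S d - 1 - a)%nat with (d - a)%nat by lia.
  rewrite Cmult_conj, <- TH, <- (toeplitz_add (d - a) j a), <- (toeplitz_add (d - j) a j).
  f_equal; f_equal; lia.
Qed.

Lemma inner_pow_reversed_top d p :
  inner_pow T d (reversed d p) (S d) = Cconj (inner_pow T (S d) (mulX p) 0).
Proof.
  rewrite inner_pow_mulX_0. unfold inner_pow. rewrite <- csum_conj, csum_rev.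
  apply csum_ext. intros a Ha. unfold reversed.
  replace (Nat.leb (S d - 1 - a) d) with true by (symmetry; apply Nat.leb_le; lia).
  replace (d - (S d - 1 - a))%nat with a by lia. replace (S d - 1 - a)%nat with (d - a)%nat by lia.
  rewrite Cmult_conj, <- TH, <- (toeplitz_add (d - a) (S d) a), <- (toeplitz_add 0 (S a) d).
  f_equal; f_equal; lia.
Qed.

Lemma inner_conj_sym d p q : inner T d p q = Cconj (inner T d q p).
Proof.
  unfold inner, inner_pow. rewrite <- csum_conj.
  rewrite (csum_ext _ (fun b => csum (fun a => Cconj (q b) * (p a * T a b)) (S d)))
    by (intros b _; rewrite <- csum_mult_l; reflexivity).
  rewrite csum_swap. apply csum_ext. intros a _.
  rewrite <- csum_mult_l, <- csum_conj. apply csum_ext. intros b _.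
  rewrite !Cmult_conj, Cconj_conj, (TH b a). ring.
Qed.

End InnerPow.

Lemma opuc_S T n a :
  opuc T (S n) a = (mulX (opuc T n) a - szego_coef T n * reversed n (opuc T n) a)%C.
Proof. reflexivity. Qed.

Lemma opuc_deg_monic T n : deg_le n (opuc T n) /\ opuc T n n = RtoC 1.
Proof.
  induction n as [|n [Hdeg Hlead]]; [split; [intros [|a] Ha; [lia | reflexivity] | reflexivity]|].
  split.
  - intros a Ha. rewrite opuc_S, (deg_reversed n _ a) by lia.
    destruct a as [|a]; [lia|]. cbn [mulX]. rewrite Hdeg by lia. ring.
  - rewrite opuc_S, (deg_reversed n _ (S n)) by lia. cbn [mulX]. rewrite Hlead. ring.
Qed.

Lemma opuc_deg T n : deg_le n (opuc T n).
Proof. apply opuc_deg_monic. Qed.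

Lemma opuc_lead T n : opuc T n n = RtoC 1.
Proof. apply opuc_deg_monic. Qed.

Lemma reversed_opuc_0 T n : reversed n (opuc T n) 0 = RtoC 1.
Proof. unfold reversed. cbn. rewrite Nat.sub_0_r, opuc_lead. apply Cconj_RtoC. Qed.

Lemma opuc_S_0 T n : opuc T (S n) 0 = (- szego_coef T n)%C.
Proof. rewrite opuc_S, reversed_opuc_0. cbn [mulX]. ring. Qed.

Section Szego.
Local Open Scope C_scope.
Variable T : nat -> nat -> C.
Hypothesis TS : toeplitz T.
Hypothesis TH : hermitian T.
Hypothesis TP : positive_definite T.

Definition orth_below (n : nat) (p : nat -> C) : Prop :=
  forall j, (j < n)%nat -> inner_pow T n p j = 0.

Lemma inner_orth n p : deg_le n p -> p n = 1 -> orth_below n p -> inner T n p p = inner_pow T n p n.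
Proof.
  intros Hd Hn HO. unfold inner.
  rewrite (csum_single _ _ n) by (try lia; intros; rewrite HO by lia; ring).
  rewrite Hn, Cconj_RtoC. ring.
Qed.

Lemma orth_norm2_pos n p : deg_le n p -> p n = 1 -> orth_below n p -> 0 < Re (inner_pow T n p n).
Proof.
  intros Hd Hn HO. rewrite <- inner_orth by auto. apply TP; [exact Hd|].
  exists n. rewrite Hn. intros E. injection E. lra.
Qed.

Lemma orth_norm2_real n p :
  deg_le n p -> p n = 1 -> orth_below n p -> Cconj (inner_pow T n p n) = inner_pow T n p n.
Proof. intros Hd Hn HO. rewrite <- inner_orth, <- inner_conj_sym by auto. reflexivity. Qed.

Lemma opuc_orth_S n : orth_below n (opuc T n) -> orth_below (S n) (opuc T (S n)).
Proof.
  intros HO j Hj.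
  assert (HN : inner_pow T n (opuc T n) n <> 0).
  { intros E. pose proof (orth_norm2_pos n _ (opuc_deg T n) (opuc_lead T n) HO) as H.
    rewrite E in H. cbn in H. lra. }
  rewrite (inner_pow_ext T _ _ (fun a => mulX (opuc T n) a - szego_coef T n * reversed n (opuc T n) a))
    by (intros; apply opuc_S).
  rewrite inner_pow_minus, inner_pow_scal, (inner_pow_widen T n (S n) (reversed n _)) by
    (try apply deg_reversed; lia).
  destruct j as [|j].
  - rewrite inner_pow_reversed, Nat.sub_0_r, (orth_norm2_real n) by (auto using opuc_deg, opuc_lead; lia).
    unfold szego_coef, opuc_norm2. field. exact HN.
  - rewrite inner_pow_mulX, inner_pow_reversed, !HO by (auto; lia).
    rewrite Cconj_RtoC. ring.
Qed.

Lemma opuc_orth_below n : orth_below n (opuc T n).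
Proof. induction n; [intros j Hj; lia | apply opuc_orth_S, IHn]. Qed.

Lemma opuc_orth n j : (j < n)%nat -> inner_pow T n (opuc T n) j = 0.
Proof. apply opuc_orth_below. Qed.

Lemma opuc_norm2_pos n : 0 < Re (opuc_norm2 T n).
Proof. apply orth_norm2_pos; auto using opuc_deg, opuc_lead, opuc_orth_below. Qed.

Lemma opuc_norm2_real n : Cconj (opuc_norm2 T n) = opuc_norm2 T n.
Proof. apply orth_norm2_real; auto using opuc_deg, opuc_lead, opuc_orth_below. Qed.

Lemma opuc_norm2_neq0 n : opuc_norm2 T n <> 0.
Proof. intros E. pose proof (opuc_norm2_pos n) as H. rewrite E in H. cbn in H. lra. Qed.

Lemma opuc_norm2_S n :
  opuc_norm2 T (S n) = opuc_norm2 T n * (1 - szego_coef T n * Cconj (szego_coef T n)).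
Proof.
  unfold opuc_norm2 at 1.
  rewrite (inner_pow_ext T _ _ (fun a => mulX (opuc T n) a - szego_coef T n * reversed n (opuc T n) a))
    by (intros; apply opuc_S).
  rewrite inner_pow_minus, inner_pow_scal, (inner_pow_widen T n (S n) (reversed n _)) by
    (try apply deg_reversed; lia).
  rewrite inner_pow_mulX, inner_pow_reversed_top by auto.
  replace (inner_pow T (S n) (mulX (opuc T n)) 0) with (szego_coef T n * opuc_norm2 T n)
    by (unfold szego_coef; field; apply opuc_norm2_neq0).
  rewrite Cmult_conj, opuc_norm2_real. unfold opuc_norm2. ring.
Qed.

Lemma verblunsky_lt1 n : Cmod (verblunsky T n) < 1.
Proof.
  unfold verblunsky. rewrite Cmod_conj.
  pose proof (opuc_norm2_pos (S n)) as H1. pose proof (opuc_norm2_pos n) as H2.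
  pose proof (opuc_norm2_real n) as H3. pose proof (Cmod_ge_0 (szego_coef T n)).
  rewrite opuc_norm2_S, <- Cmod2_conj in H1.
  destruct (opuc_norm2 T n) as [x y]. unfold Cconj in H3; cbn in *. injection H3 as Hy.
  set (c := Cmod (szego_coef T n)) in *.
  assert (Hc : 0 < 1 - c * c) by (apply (Rmult_lt_reg_l x); [lra | ring_simplify in H1; nra]).
  nra.
Qed.

Lemma inner_pow_mulX_opuc n j :
  (j <= n)%nat ->
  inner_pow T (S n) (mulX (opuc T n)) j = szego_coef T n * inner_pow T n (reversed n (opuc T n)) j.
Proof.
  intros Hj.
  rewrite (inner_pow_ext T _ _ (fun a => opuc T (S n) a + szego_coef T n * reversed n (opuc T n) a))
    by (intros; rewrite opuc_S; ring).
  rewrite inner_pow_plus, inner_pow_scal, opuc_orth, (inner_pow_widen T n (S n) (reversed n _))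
    by (try apply deg_reversed; lia).
  ring.
Qed.

Lemma deg_orth_eq0 m p :
  deg_le m p -> (forall j, (j <= m)%nat -> inner_pow T m p j = 0) -> forall a, p a = 0.
Proof.
  intros Hd Horth a. apply NNPP. intros Hne.
  assert (Hinner : inner T m p p = 0).
  { apply csum_eq0. intros b Hb. rewrite Horth by lia. ring. }
  pose proof (TP m p Hd (ex_intro _ a Hne)) as H. rewrite Hinner in H. cbn in H. lra.
Qed.

End Szego.

(** * Evolution of the orthogonal polynomials under the Schur flow *)

Lemma is_derive_csum (f : R -> nat -> C) (df : nat -> C) (t : R) n :
  (forall a, is_derive (fun s => f s a) t (df a)) ->
  is_derive (fun s => csum (f s) n) t (csum df n).
Proof.
  intros H. induction n as [|n IH]; cbn [csum];
    [apply is_derive_Cconst | apply is_derive_Cplus; [exact IH | apply H]].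
Qed.

(* If μ_t = e^(t (z + conj z)) μ / ∫ e^(t (z + conj z)) dμ, its moments evolve by this law. *)
Definition moment_flow (T : R -> nat -> nat -> C) : Prop :=
  forall t a b, is_derive (fun s => T s a b) t
    (T t (S a) b + T t a (S b) - T t a b * (T t 1%nat 0%nat + T t 0%nat 1%nat))%C.

Definition szego_flow_rhs (T : nat -> nat -> C) (m a : nat) : C :=
  ((- (1 - szego_coef T m * Cconj (szego_coef T m))) * opuc T m a
   - szego_coef T (S m) * reversed (S m) (opuc T (S m)) a
   - (szego_coef T (S m) * Cconj (szego_coef T m)) * opuc T (S m) a)%C.

Section Flow.
Local Open Scope C_scope.
Variable T : R -> nat -> nat -> C.
Hypothesis TS : forall t, toeplitz (T t).
Hypothesis TH : forall t, hermitian (T t).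
Hypothesis TP : forall t, positive_definite (T t).
Hypothesis TD : moment_flow T.

Let opuc_orth_at t := opuc_orth (T t) (TS t) (TH t) (TP t).

Lemma ex_derive_inner_pow (p : R -> nat -> C) d j (t : R) :
  (forall a, ex_derive (fun s => p s a) t) -> ex_derive (fun s => inner_pow (T s) d (p s) j) t.
Proof.
  intros Hp. unfold inner_pow. induction (S d) as [|k IH]; cbn [csum].
  - apply ex_derive_Cconst.
  - apply ex_derive_Cplus; [exact IH | apply ex_derive_Cmult; [apply Hp | eexists; apply TD]].
Qed.

Lemma ex_derive_opuc n a (t : R) : ex_derive (fun s => opuc (T s) n a) t.
Proof.
  revert a. induction n as [|n IH]; intros a; [exact (ex_derive_Cconst (poly1 a) t) |].
  refine (ex_derive_ext (fun s => mulX (opuc (T s) n) a - szego_coef (T s) n * reversed n (opuc (T s) n) a)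
    _ t (fun s => eq_sym (opuc_S (T s) n a)) _).
  apply ex_derive_Cminus; [destruct a; [exact (ex_derive_Cconst 0 t) | apply IH] |].
  apply ex_derive_Cmult; [unfold szego_coef; apply ex_derive_Cdiv |].
  - apply ex_derive_inner_pow. intros [|b]; [exact (ex_derive_Cconst 0 t) | apply IH].
  - apply ex_derive_inner_pow, IH.
  - apply (opuc_norm2_neq0 (T t)); auto.
  - unfold reversed. destruct (Nat.leb a n); [apply ex_derive_Cconj, IH | exact (ex_derive_Cconst 0 t)].
Qed.

Definition opuc_dot (n : nat) (t : R) (a : nat) : C := CDerive (fun s => opuc (T s) n a) t.

Lemma is_derive_opuc n a t : is_derive (fun s => opuc (T s) n a) t (opuc_dot n t a).
Proof. apply ex_derive_CDerive, ex_derive_opuc. Qed.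

Lemma opuc_dot_high n t a : (n <= a)%nat -> opuc_dot n t a = 0.
Proof.
  intros Ha.
  apply (is_derive_Cconst_0 (fun s => opuc (T s) n a) (if Nat.eqb a n then 1 else 0) t);
    [intros s | apply is_derive_opuc].
  destruct (Nat.eqb_spec a n) as [->|Hne]; [apply opuc_lead | apply opuc_deg; lia].
Qed.

Lemma is_derive_inner_pow_opuc n j t :
  is_derive (fun s => inner_pow (T s) n (opuc (T s) n) j) t
    (inner_pow (T t) n (opuc_dot n t) j
     + (inner_pow (T t) (S n) (mulX (opuc (T t) n)) j + inner_pow (T t) n (opuc (T t) n) (S j)
        - inner_pow (T t) n (opuc (T t) n) j * (T t 1%nat 0%nat + T t 0%nat 1%nat))).
Proof.
  eapply is_derive_eq.
  - apply (is_derive_csum (fun s a => opuc (T s) n a * T s a j)).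
    intros a. apply is_derive_Cmult; [apply is_derive_opuc | apply TD].
  - reflexivity.
  - unfold inner_pow. rewrite (csum_Sl (fun a => mulX _ a * _)). cbn [mulX].
    rewrite Cmult_0_l, Cplus_0_l, (Cmult_comm (csum _ _)), <- csum_mult_l.
    rewrite <- !csum_plus, <- csum_minus, <- csum_plus.
    apply csum_ext. intros a _. ring.
Qed.

Lemma inner_pow_opuc_dot n j t :
  (j < n)%nat ->
  inner_pow (T t) n (opuc_dot n t) j
  = - (inner_pow (T t) (S n) (mulX (opuc (T t) n)) j + inner_pow (T t) n (opuc (T t) n) (S j)).
Proof.
  intros Hj.
  pose proof (is_derive_Cconst_0 _ 0 t _ (fun s => opuc_orth_at s n j Hj)
    (is_derive_inner_pow_opuc n j t)) as H.
  rewrite (opuc_orth_at t n j Hj) in H.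
  match type of H with ?X + ?Y = _ => replace X with (X + Y - Y) by ring end.
  rewrite H. ring.
Qed.

(* Both sides have degree at most [m] and are orthogonal to 1, ..., z^m, so they agree. *)
Lemma opuc_dot_S m t a : opuc_dot (S m) t a = szego_flow_rhs (T t) m a.
Proof.
  set (E b := opuc_dot (S m) t b - szego_flow_rhs (T t) m b).
  assert (Edeg : deg_le m E).
  { intros b Hb. unfold E, szego_flow_rhs. rewrite opuc_dot_high, (opuc_deg _ m) by lia.
    destruct (Nat.eq_dec b (S m)) as [->|Hne].
    - rewrite opuc_lead. unfold reversed. rewrite Nat.leb_refl, Nat.sub_diag, opuc_S_0, Copp_conj. ring.
    - rewrite (opuc_deg _ (S m)), deg_reversed by lia. ring. }
  assert (Eorth : forall j, (j <= m)%nat -> inner_pow (T t) (S m) E j = 0).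
  { intros j Hj. unfold E, szego_flow_rhs.
    rewrite inner_pow_minus, !inner_pow_minus, !inner_pow_scal, inner_pow_opuc_dot,
      inner_pow_mulX_opuc, (opuc_orth_at t (S m) j), (inner_pow_widen _ m (S m) (opuc _ m))
      by (auto using opuc_deg; lia).
    destruct (Nat.eq_dec j m) as [->|Hne].
    - change (inner_pow (T t) (S m) (opuc (T t) (S m)) (S m)) with (opuc_norm2 (T t) (S m)).
      change (inner_pow (T t) m (opuc (T t) m) m) with (opuc_norm2 (T t) m).
      rewrite opuc_norm2_S by auto. ring.
    - rewrite (opuc_orth_at t (S m) (S j)), (opuc_orth_at t m j) by lia. ring. }
  assert (E0 : E a = 0).
  { apply (deg_orth_eq0 (T t) (TP t) m E Edeg). intros j Hj.
    rewrite <- (inner_pow_widen _ m (S m)) by (auto; lia). apply Eorth, Hj. }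
  unfold E in E0. rewrite <- (Cplus_0_l (szego_flow_rhs _ _ _)), <- E0. ring.
Qed.

Lemma alpha_prev_verblunsky n t :
  alpha_prev (fun k s => verblunsky (T s) k) n t = - Cconj (opuc (T t) n 0).
Proof.
  destruct n as [|m]; cbn [alpha_prev].
  - apply injective_projections; cbn; ring.
  - rewrite opuc_S_0, Copp_conj. apply injective_projections; cbn; ring.
Qed.

Lemma is_derive_verblunsky n t :
  is_derive (fun s => verblunsky (T s) n) t
    (RtoC (1 - Cmod (verblunsky (T t) n) ^ 2)
     * (verblunsky (T t) (S n) - alpha_prev (fun k s => verblunsky (T s) k) n t)).
Proof.
  eapply is_derive_eq.
  - apply is_derive_Cconj, is_derive_Copp, (is_derive_opuc (S n) 0 t).
  - intros s. cbv beta. rewrite opuc_S_0. unfold verblunsky. f_equal. ring.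
  - rewrite opuc_dot_S. unfold szego_flow_rhs, verblunsky.
    rewrite reversed_opuc_0, opuc_S_0, Cmod_conj, RtoC_minus, Cmod2_conj.
    rewrite alpha_prev_verblunsky.
    repeat rewrite ?Copp_conj, ?Cminus_conj, ?Cmult_conj, ?Cconj_conj, ?Cconj_RtoC.
    match goal with |- ?x = ?y => change (@eq C x y) end. ring.
Qed.

End Flow.

Lemma exp_le_compat a b : a <= b -> exp a <= exp b.
Proof. intros [H|H]; [apply Rlt_le, exp_increasing, H | rewrite H; lra]. Qed.

Lemma exp_mult_INR a k : exp (a * INR k) = exp a ^ k.
Proof.
  induction k; [cbn; rewrite Rmult_0_r, exp_0; reflexivity|].
  rewrite S_INR, Rmult_plus_distr_l, Rmult_1_r, exp_plus, IHk. cbn. ring.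
Qed.

Lemma Rabs_le_between c u : Rmin 0 u <= c <= Rmax 0 u -> Rabs c <= Rabs u.
Proof.
  unfold Rmin, Rmax. intros. destruct (Rle_dec 0 u); unfold Rabs;
    destruct (Rcase_abs c), (Rcase_abs u); lra.
Qed.

Lemma exp_sub1_bound u : Rabs (exp u - 1) <= Rabs u * exp (Rabs u).
Proof.
  destruct (MVT_abs exp exp 0 u) as [c [Hr Hc]]; [intros; apply derivable_pt_lim_exp|].
  rewrite exp_0, Rminus_0_r in Hr. rewrite Hr, (Rabs_right (exp c)), Rmult_comm
    by (apply Rle_ge, Rlt_le, exp_pos).
  apply Rmult_le_compat_l, exp_le_compat, Rle_trans with (Rabs c), Rabs_le_between;
    auto using Rabs_pos, Rle_abs.
Qed.

Lemma exp_taylor1_bound u : Rabs (exp u - 1 - u) <= u ^ 2 * exp (Rabs u).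
Proof.
  destruct (MVT_abs (fun v => exp v - 1 - v) (fun v => exp v - 1) 0 u) as [c [Hr Hc]].
  { intros. apply is_derive_Reals. auto_derive; auto. ring. }
  rewrite exp_0 in Hr. replace (1 - 1 - 0) with 0 in Hr by ring.
  rewrite !Rminus_0_r in Hr. rewrite Hr.
  pose proof (exp_sub1_bound c). pose proof (Rabs_le_between _ _ Hc).
  pose proof (Rabs_pos c). pose proof (exp_pos (Rabs c)).
  assert (exp (Rabs c) <= exp (Rabs u)) by (apply exp_le_compat; auto).
  replace (u ^ 2) with (Rabs u * Rabs u) by (rewrite <- Rabs_mult, Rabs_right; nra).
  pose proof (Rabs_pos u).
  apply Rle_trans with (Rabs c * exp (Rabs c) * Rabs u); [apply Rmult_le_compat_r; lra |].
  replace (Rabs c * exp (Rabs c) * Rabs u) with (Rabs c * Rabs u * exp (Rabs c)) by ring.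
  apply Rmult_le_compat; nra.
Qed.

Lemma is_derive_quadratic_remainder (f : R -> R) t l K :
  (forall u, Rabs u <= 1 -> Rabs (f (t + u) - f t - u * l) <= K * u ^ 2) -> is_derive f t l.
Proof.
  intros H. apply is_derive_Reals. intros eps Heps.
  set (K' := Rabs K + 1).
  assert (HK' : 0 < K') by (unfold K'; pose proof (Rabs_pos K); lra).
  assert (Hd : 0 < Rmin 1 (eps / K')) by (apply Rmin_pos; [lra | apply Rdiv_lt_0_compat; lra]).
  exists (mkposreal _ Hd). intros u Hu Hud. cbn in Hud.
  pose proof (Rmin_l 1 (eps / K')). pose proof (Rmin_r 1 (eps / K')).
  assert (Hu0 : 0 < Rabs u) by (apply Rabs_pos_lt, Hu).
  pose proof (H u ltac:(lra)) as Hr.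
  replace ((f (t + u) - f t) / u - l) with ((f (t + u) - f t - u * l) / u) by (field; exact Hu).
  unfold Rdiv. rewrite Rabs_mult, Rabs_inv.
  apply Rmult_lt_reg_r with (Rabs u); [exact Hu0|].
  rewrite Rmult_assoc, Rinv_l, Rmult_1_r by lra.
  replace (u ^ 2) with (Rabs u * Rabs u) in Hr by (rewrite <- Rabs_mult, Rabs_right; nra).
  assert (Rabs u * K' < eps) by (apply Rmult_lt_reg_r with (/ K'); [apply Rinv_0_lt_compat; lra|];
    rewrite Rmult_assoc, Rinv_r, Rmult_1_r by lra; lra).
  pose proof (Rle_abs K). unfold K' in *. nra.
Qed.

Lemma ex_series_Rplus (a b : nat -> R) : ex_series a -> ex_series b -> ex_series (fun n => a n + b n).
Proof. intros Ha Hb. exact (@ex_series_plus R_AbsRing R_NormedModule a b Ha Hb). Qed.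

Lemma ex_series_Rminus (a b : nat -> R) : ex_series a -> ex_series b -> ex_series (fun n => a n - b n).
Proof. intros Ha Hb. exact (@ex_series_minus R_AbsRing R_NormedModule a b Ha Hb). Qed.

Lemma ex_series_Rscal (c : R) (a : nat -> R) : ex_series a -> ex_series (fun n => c * a n).
Proof. intros Ha. exact (@ex_series_scal_l R_AbsRing R_NormedModule c a Ha). Qed.

Lemma Series_R0 : Series (fun _ => 0) = 0.
Proof. rewrite (Series_ext _ (fun n => 0 * 1)) by (intros; ring). rewrite Series_scal_l. ring. Qed.

Lemma Series_ge_term (a : nat -> R) j : (forall k, 0 <= a k) -> ex_series a -> a j <= Series a.
Proof.
  intros Hp He. rewrite (Series_incr_n a (S j)) by (auto; lia). cbn [pred].
  assert (a j <= sum_f_R0 a j).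
  { destruct j; [cbn; lra|]. rewrite tech5. pose proof (cond_pos_sum a j Hp). lra. }
  assert (0 <= Series (fun k => a (S j + k)%nat)).
  { rewrite <- Series_R0. apply Series_le; [intros; split; [lra | apply Hp]|].
    apply (ex_series_incr_n a (S j)), He. }
  lra.
Qed.

Lemma Series_Rabs_le (f g : nat -> R) :
  (forall k, Rabs (f k) <= g k) -> ex_series g -> Rabs (Series f) <= Series g.
Proof.
  intros H Hg. eapply Rle_trans; [apply Series_Rabs|].
  - apply (@ex_series_le R_AbsRing R_CompleteNormedModule) with (b := g); [|exact Hg].
    intros n. apply Rle_trans with (Rabs (f n)); [right; apply Rabs_Rabsolu | apply H].
  - apply Series_le; [intros n; split; [apply Rabs_pos | apply H] | exact Hg].
Qed.

Lemma ex_series_geom_bound (f : nat -> R) (c q : R) :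
  0 <= q < 1 -> (forall k, Rabs (f k) <= c * q ^ k) -> ex_series f.
Proof.
  intros Hq H. apply ex_series_Rabs.
  apply (@ex_series_le R_AbsRing R_CompleteNormedModule) with (b := fun k => c * q ^ k).
  - intros n. apply Rle_trans with (Rabs (f n)); [right; apply Rabs_Rabsolu | apply H].
  - apply ex_series_Rscal, ex_series_geom. rewrite Rabs_right; lra.
Qed.

(* The measure is μ = Σ_k e^(-15 k) δ_(ζ_k) with ζ_k = -x_k + i (-1)^k sqrt(1 - x_k^2) and
   x_k = 2^-k; [weight k t] is the mass of ζ_k in μ_t before normalisation, since
   e^(t (ζ_k + conj ζ_k)) = e^(-2 t x_k). *)
Definition node_cos (k : nat) : R := (/ 2) ^ k.

Definition weight (k : nat) (t : R) : R := exp (- 15 * INR k - 2 * t * node_cos k).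

Lemma node_cos_pos k : 0 < node_cos k.
Proof. apply pow_lt. lra. Qed.

Lemma node_cos_le1 k : node_cos k <= 1.
Proof. unfold node_cos. induction k; cbn; [lra|]. pose proof (pow_lt (/ 2) k ltac:(lra)). nra. Qed.

Lemma weight_pos k t : 0 < weight k t.
Proof. apply exp_pos. Qed.

Lemma weight_shift k t u : weight k (t + u) = weight k t * exp (- 2 * u * node_cos k).
Proof. unfold weight. rewrite <- exp_plus. f_equal. ring. Qed.

Lemma exp_m15_lt1 : 0 <= exp (-15) < 1.
Proof.
  split; [apply Rlt_le, exp_pos|]. rewrite <- exp_0. apply exp_increasing. lra.
Qed.

Lemma weight_le_geom k t : weight k t <= exp (2 * Rabs t) * exp (-15) ^ k.
Proof.
  unfold weight. rewrite <- exp_mult_INR, <- exp_plus. apply exp_le_compat.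
  pose proof (node_cos_pos k). pose proof (node_cos_le1 k).
  assert (- t * node_cos k <= Rabs t) by (unfold Rabs; destruct (Rcase_abs t); nra).
  lra.
Qed.

Lemma ex_series_weight (h : nat -> R) B t :
  (forall k, Rabs (h k) <= B) -> ex_series (fun k => weight k t * h k).
Proof.
  intros H. apply (ex_series_geom_bound _ (exp (2 * Rabs t) * B) (exp (-15)) exp_m15_lt1).
  intros k. rewrite Rabs_mult, (Rabs_right (weight k t)) by (apply Rle_ge, Rlt_le, weight_pos).
  pose proof (weight_le_geom k t). pose proof (weight_pos k t). pose proof (Rabs_pos (h k)).
  pose proof (pow_le (exp (-15)) k (proj1 exp_m15_lt1)).
  replace (exp (2 * Rabs t) * B * exp (-15) ^ k) with ((exp (2 * Rabs t) * exp (-15) ^ k) * B) by ring.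
  apply Rmult_le_compat; auto; lra.
Qed.

Lemma ex_series_weight_mass t : ex_series (fun k => weight k t).
Proof.
  apply (ex_series_geom_bound _ (exp (2 * Rabs t)) (exp (-15)) exp_m15_lt1). intros k.
  rewrite Rabs_right by (apply Rle_ge, Rlt_le, weight_pos). apply weight_le_geom.
Qed.

Lemma weight_taylor1 k t u :
  Rabs (weight k (t + u) - weight k t - u * (weight k t * (- 2 * node_cos k)))
  <= weight k t * (4 * u ^ 2 * exp (2 * Rabs u)).
Proof.
  rewrite weight_shift.
  replace (weight k t * exp (- 2 * u * node_cos k) - weight k t - u * (weight k t * (- 2 * node_cos k)))
    with (weight k t * (exp (- 2 * u * node_cos k) - 1 - (- 2 * u * node_cos k))) by ring.
  rewrite Rabs_mult, (Rabs_right (weight k t)) by (apply Rle_ge, Rlt_le, weight_pos).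
  apply Rmult_le_compat_l; [apply Rlt_le, weight_pos|].
  eapply Rle_trans; [apply exp_taylor1_bound|].
  pose proof (node_cos_pos k). pose proof (node_cos_le1 k). pose proof (Rabs_pos u).
  assert (Rabs (- 2 * u * node_cos k) <= 2 * Rabs u).
  { rewrite !Rabs_mult, (Rabs_left (-2)), (Rabs_right (node_cos k)) by lra. nra. }
  apply Rmult_le_compat; [nra | apply Rlt_le, exp_pos | | apply exp_le_compat; lra].
  replace ((- 2 * u * node_cos k) ^ 2) with (4 * u ^ 2 * node_cos k ^ 2) by ring.
  assert (0 <= u ^ 2) by nra. assert (node_cos k ^ 2 <= 1) by nra. nra.
Qed.

Lemma weighted_series_taylor1 (h : nat -> R) B t u : (forall k, Rabs (h k) <= B) ->
  Rabs (Series (fun k => weight k (t + u) * h k) - Series (fun k => weight k t * h k)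
        - u * Series (fun k => weight k t * (- 2 * node_cos k * h k)))
  <= B * Series (fun k => weight k t) * (4 * u ^ 2 * exp (2 * Rabs u)).
Proof.
  intros HB.
  assert (Hbnd : forall k, Rabs (- 2 * node_cos k * h k) <= 2 * B).
  { intros k. rewrite !Rabs_mult, (Rabs_left (-2)), (Rabs_right (node_cos k))
      by (pose proof (node_cos_pos k); lra).
    pose proof (node_cos_pos k). pose proof (node_cos_le1 k). pose proof (HB k).
    pose proof (Rabs_pos (h k)). nra. }
  pose proof (ex_series_weight _ B (t + u) HB) as E1.
  pose proof (ex_series_weight _ B t HB) as E2.
  pose proof (ex_series_weight _ (2 * B) t Hbnd) as E3.
  pose proof (ex_series_weight_mass t) as EZ.
  rewrite <- Series_minus, <- (Series_scal_l u), <- Series_minus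
    by auto using ex_series_Rminus, ex_series_Rscal.
  replace (B * Series (fun k => weight k t) * (4 * u ^ 2 * exp (2 * Rabs u)))
    with ((B * (4 * u ^ 2 * exp (2 * Rabs u))) * Series (fun k => weight k t)) by ring.
  rewrite <- Series_scal_l.
  apply Series_Rabs_le; [| apply ex_series_Rscal, EZ].
  intros k. pose proof (weight_taylor1 k t u) as Hk. pose proof (HB k) as Hh.
  replace (weight k (t + u) * h k - weight k t * h k - u * (weight k t * (- 2 * node_cos k * h k)))
    with ((weight k (t + u) - weight k t - u * (weight k t * (- 2 * node_cos k))) * h k) by ring.
  rewrite Rabs_mult. pose proof (Rabs_pos (h k)). pose proof (weight_pos k t).
  pose proof (Rabs_pos (weight k (t + u) - weight k t - u * (weight k t * (- 2 * node_cos k)))).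
  assert (0 <= 4 * u ^ 2 * exp (2 * Rabs u)) by (pose proof (exp_pos (2 * Rabs u)); nra).
  replace (B * (4 * u ^ 2 * exp (2 * Rabs u)) * weight k t)
    with ((weight k t * (4 * u ^ 2 * exp (2 * Rabs u))) * B) by ring.
  apply Rmult_le_compat; lra.
Qed.

Lemma is_derive_weighted_series (h : nat -> R) B t : (forall k, Rabs (h k) <= B) ->
  is_derive (fun s => Series (fun k => weight k s * h k)) t
    (Series (fun k => weight k t * (- 2 * node_cos k * h k))).
Proof.
  intros HB. apply (is_derive_quadratic_remainder _ _ _ (B * Series (fun k => weight k t) * 4 * exp 2)).
  intros u Hu. eapply Rle_trans; [apply weighted_series_taylor1, HB|].
  assert (0 <= B) by (pose proof (HB 0%nat); pose proof (Rabs_pos (h 0%nat)); lra).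
  assert (0 <= Series (fun k => weight k t)).
  { rewrite <- Series_R0. apply Series_le; [intros; split; [lra | apply Rlt_le, weight_pos]|].
    apply ex_series_weight_mass. }
  assert (exp (2 * Rabs u) <= exp 2) by (apply exp_le_compat; lra).
  assert (0 <= u ^ 2) by nra.
  replace (B * Series (fun k => weight k t) * 4 * exp 2 * u ^ 2)
    with (B * Series (fun k => weight k t) * (4 * u ^ 2 * exp 2)) by ring.
  apply Rmult_le_compat_l; [nra|]. nra.
Qed.

Definition bounded (g : nat -> C) : Prop := exists B, forall k, Cmod (g k) <= B.

Definition wsum (t : R) (g : nat -> C) : C :=
  (Series (fun k => weight k t * Re (g k)), Series (fun k => weight k t * Im (g k))).

Lemma bounded_const (c : C) : bounded (fun _ => c).
Proof. exists (Cmod c). intros; lra. Qed.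

Lemma bounded_plus (f g : nat -> C) : bounded f -> bounded g -> bounded (fun k => f k + g k)%C.
Proof.
  intros [B1 H1] [B2 H2]. exists (B1 + B2). intros k.
  eapply Rle_trans; [apply Cmod_triangle | apply Rplus_le_compat; auto].
Qed.

Lemma bounded_mult (f g : nat -> C) : bounded f -> bounded g -> bounded (fun k => f k * g k)%C.
Proof.
  intros [B1 H1] [B2 H2]. exists (B1 * B2). intros k. rewrite Cmod_mult.
  apply Rmult_le_compat; auto using Cmod_ge_0.
Qed.

Lemma bounded_conj (f : nat -> C) : bounded f -> bounded (fun k => Cconj (f k)).
Proof. intros [B H]. exists B. intros k. rewrite Cmod_conj. auto. Qed.

Lemma bounded_csum (f : nat -> nat -> C) n :
  (forall a, bounded (f a)) -> bounded (fun k => csum (fun a => f a k) n).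
Proof. intros H. induction n; cbn; [apply bounded_const | apply bounded_plus; auto]. Qed.

Lemma ex_series_weight_Re (g : nat -> C) t : bounded g -> ex_series (fun k => weight k t * Re (g k)).
Proof.
  intros [B H]. apply (ex_series_weight _ B). intros k. eapply Rle_trans; [apply re_le_Cmod | auto].
Qed.

Lemma ex_series_weight_Im (g : nat -> C) t : bounded g -> ex_series (fun k => weight k t * Im (g k)).
Proof.
  intros [B H]. apply (ex_series_weight _ B). intros k. eapply Rle_trans; [apply im_le_Cmod | auto].
Qed.

Lemma wsum_ext t (f g : nat -> C) : (forall k, f k = g k) -> wsum t f = wsum t g.
Proof. intros E. unfold wsum. f_equal; apply Series_ext; intros k; rewrite E; reflexivity. Qed.

Lemma wsum_plus t (f g : nat -> C) :
  bounded f -> bounded g -> wsum t (fun k => f k + g k)%C = (wsum t f + wsum t g)%C.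
Proof.
  intros Hf Hg. unfold wsum. apply injective_projections; cbn;
    [ rewrite <- Series_plus by (apply ex_series_weight_Re; auto)
    | rewrite <- Series_plus by (apply ex_series_weight_Im; auto) ];
    apply Series_ext; intros; unfold Re, Im; cbn; ring.
Qed.

Lemma wsum_scal t (c : C) (g : nat -> C) : bounded g -> wsum t (fun k => c * g k)%C = (c * wsum t g)%C.
Proof.
  intros Hg. pose proof (ex_series_weight_Re g t Hg). pose proof (ex_series_weight_Im g t Hg).
  unfold wsum. apply injective_projections; cbn; rewrite <- !Series_scal_l;
    [rewrite <- Series_minus | rewrite <- Series_plus]; auto using ex_series_Rscal;
    apply Series_ext; intros; unfold Re, Im; cbn; ring.
Qed.

Lemma wsum_conj t (g : nat -> C) : wsum t (fun k => Cconj (g k)) = Cconj (wsum t g).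
Proof.
  unfold wsum, Cconj. cbn. f_equal. rewrite <- Series_opp.
  apply Series_ext; intros; unfold Im; cbn; ring.
Qed.

Lemma wsum_csum t (f : nat -> nat -> C) n : (forall a, bounded (f a)) ->
  wsum t (fun k => csum (fun a => f a k) n) = csum (fun a => wsum t (f a)) n.
Proof.
  intros H. induction n; cbn.
  - unfold wsum. cbn. rewrite (Series_ext _ (fun _ => 0)) by (intros; ring). rewrite Series_R0.
    reflexivity.
  - rewrite wsum_plus, IHn; auto using bounded_csum.
Qed.

Lemma is_derive_wsum (g : nat -> C) t : bounded g ->
  is_derive (fun s => wsum s g) t (wsum t (fun k => RtoC (- 2 * node_cos k) * g k)%C).
Proof.
  intros [B Hg]. apply is_derive_Re_Im.
  - eapply is_derive_eq; [apply (is_derive_weighted_series (fun k => Re (g k)) B t) | reflexivity |].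
    + intros k. eapply Rle_trans; [apply re_le_Cmod | auto].
    + unfold wsum. cbn. apply Series_ext; intros; unfold Re, Im; cbn; ring.
  - eapply is_derive_eq; [apply (is_derive_weighted_series (fun k => Im (g k)) B t) | reflexivity |].
    + intros k. eapply Rle_trans; [apply im_le_Cmod | auto].
    + unfold wsum. cbn. apply Series_ext; intros; unfold Re, Im; cbn; ring.
Qed.

(** * The measure and its moments *)

Definition node_sin (k : nat) : R := sqrt (1 - node_cos k ^ 2).

Definition node (k : nat) : C := (- node_cos k, (-1) ^ k * node_sin k).

Lemma node_sin_sq k : node_sin k ^ 2 = 1 - node_cos k ^ 2.
Proof.
  unfold node_sin. rewrite <- Rsqr_pow2. apply Rsqr_sqrt.
  pose proof (node_cos_pos k). pose proof (node_cos_le1 k). nra.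
Qed.

Lemma neg1_pow_sq k : ((-1) ^ k) ^ 2 = 1.
Proof. rewrite <- pow_mult, Nat.mul_comm, pow_mult. replace ((-1) ^ 2) with 1 by ring. apply pow1. Qed.

Lemma node_mult_conj k : (node k * Cconj (node k))%C = RtoC 1.
Proof.
  unfold node, Cmult, Cconj, RtoC. cbn. pose proof (node_sin_sq k). pose proof (neg1_pow_sq k).
  f_equal; nra.
Qed.

Lemma node_plus_conj k : (node k + Cconj (node k))%C = RtoC (- 2 * node_cos k).
Proof. unfold node, Cplus, Cconj, RtoC. cbn. f_equal; ring. Qed.

Lemma Cmod_node k : Cmod (node k) = 1.
Proof.
  assert (E : RtoC (Cmod (node k) ^ 2) = RtoC 1) by (rewrite Cmod2_conj; apply node_mult_conj).
  injection E as E. pose proof (Cmod_ge_0 (node k)). nra.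
Qed.

Lemma node_cos_lt i j : (i < j)%nat -> node_cos j < node_cos i.
Proof.
  intros H. unfold node_cos. replace j with (i + (j - i))%nat by lia. rewrite pow_add.
  pose proof (pow_lt (/ 2) i ltac:(lra)).
  assert ((/ 2) ^ (j - i) < 1) by (apply pow_lt_1_compat; [lra | lia]).
  nra.
Qed.

Lemma node_inj i j : node i = node j -> i = j.
Proof.
  intros E. injection E as E _.
  destruct (Nat.lt_trichotomy i j) as [h|[h|h]]; auto; pose proof (node_cos_lt _ _ h); lra.
Qed.

Definition node_mono (a b k : nat) : C := (node k ^ a * Cconj (node k) ^ b)%C.

Lemma bounded_node_mono a b : bounded (node_mono a b).
Proof.
  exists 1. intros k. unfold node_mono.
  rewrite Cmod_mult, !Cmod_pow, Cmod_conj, Cmod_node, !pow1. lra.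
Qed.

Definition mass (t : R) : C := wsum t (fun _ => RtoC 1).

Definition moment (t : R) (a b : nat) : C := (wsum t (node_mono a b) / mass t)%C.

Lemma mass_real t : mass t = RtoC (Series (fun k => weight k t)).
Proof.
  unfold mass, wsum. apply injective_projections; cbn; [apply Series_ext; intros; ring|].
  rewrite (Series_ext _ (fun _ => 0)) by (intros; ring). apply Series_R0.
Qed.

Lemma mass_pos t : 0 < Series (fun k => weight k t).
Proof.
  apply Rlt_le_trans with (weight 0 t); [apply weight_pos|].
  apply (Series_ge_term (fun k => weight k t));
    [intros; apply Rlt_le, weight_pos | apply ex_series_weight_mass].
Qed.

Lemma mass_neq0 t : mass t <> RtoC 0.
Proof. rewrite mass_real. intros E. injection E as E. pose proof (mass_pos t). lra. Qed.

Lemma moment_0_0 t : moment t 0 0 = RtoC 1.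
Proof.
  unfold moment. rewrite (wsum_ext t (node_mono 0 0) (fun _ => RtoC 1)).
  - fold (mass t). field. apply mass_neq0.
  - intros k. unfold node_mono. cbn. ring.
Qed.

Lemma moment_toeplitz t : toeplitz (moment t).
Proof.
  intros a b. unfold moment. f_equal. apply wsum_ext. intros k. unfold node_mono. cbn.
  transitivity (node k ^ a * Cconj (node k) ^ b * (node k * Cconj (node k)))%C; [ring|].
  rewrite node_mult_conj. ring.
Qed.

Lemma moment_hermitian t : hermitian (moment t).
Proof.
  intros a b. unfold moment. rewrite Cdiv_conj by apply mass_neq0.
  rewrite mass_real, Cconj_RtoC, <- mass_real, <- wsum_conj. f_equal. apply wsum_ext. intros k.
  unfold node_mono. rewrite Cmult_conj, !Cpow_conj, Cconj_conj. ring.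
Qed.

Lemma node_mono_deriv a b k :
  (RtoC (- 2 * node_cos k) * node_mono a b k)%C = (node_mono (S a) b k + node_mono a (S b) k)%C.
Proof. unfold node_mono. rewrite <- node_plus_conj. cbn. ring. Qed.

Lemma moment_flow_law : moment_flow moment.
Proof.
  intros t a b. unfold moment. eapply is_derive_eq.
  - apply is_derive_Cmult; [apply is_derive_wsum, bounded_node_mono|].
    apply is_derive_Cinv; [apply is_derive_wsum, bounded_const | apply mass_neq0].
  - reflexivity.
  - rewrite (wsum_ext t _ _ (node_mono_deriv a b)).
    rewrite (wsum_ext t (fun k => RtoC (- 2 * node_cos k) * RtoC 1)%C
               (fun k => node_mono 1 0 k + node_mono 0 1 k)%C)
      by (intros k; rewrite <- node_mono_deriv; unfold node_mono; cbn; ring).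
    rewrite !wsum_plus by apply bounded_node_mono.
    fold (mass t). match goal with |- ?x = ?y => change (@eq C x y) end.
    field. apply mass_neq0.
Qed.

(** * Positivity of the moment form *)

Definition peval (p : nat -> C) (n : nat) (x : C) : C := csum (fun a => p a * x ^ a)%C n.

Section Horner.
Local Open Scope C_scope.

(* Horner's scheme: the quotient coefficients are the tail sums Σ_i p_(a+1+i) z^i. *)
Lemma horner_division d (p : nat -> C) (z : C) : deg_le (S d) p ->
  exists q r, deg_le d q /\ p 0%nat = r - z * q 0%nat /\ (forall a, p (S a) = q a - z * q (S a)) /\
    (forall x, peval p (S (S d)) x = r + (x - z) * peval q (S d) x).
Proof.
  intros Hd.
  set (qq a := csum (fun i => p (a + i)%nat * z ^ i) (S (S d) - a)).
  assert (Hqq : forall a, qq a = p a + z * qq (S a)).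
  { intros b. unfold qq. destruct (Nat.le_gt_cases b (S d)) as [Hb|Hb].
    - replace (S (S d) - b)%nat with (S (S d - b)) by lia.
      rewrite csum_Sl. replace (S (S d) - S b)%nat with (S d - b)%nat by lia.
      rewrite <- csum_mult_l, Nat.add_0_r. cbn [Cpow]. f_equal; [ring|].
      apply csum_ext. intros i _. rewrite Nat.add_succ_r. cbn. ring.
    - replace (S (S d) - b)%nat with 0%nat by lia. replace (S (S d) - S b)%nat with 0%nat by lia.
      cbn. rewrite Hd by lia. ring. }
  exists (fun a => qq (S a)), (qq 0%nat). split; [|split; [|split]].
  - intros b Hb. unfold qq. replace (S (S d) - S b)%nat with 0%nat by lia. reflexivity.
  - rewrite (Hqq 0%nat). ring.
  - intros a. rewrite (Hqq (S a)). ring.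
  - intros x. unfold peval.
    rewrite (csum_ext _ (fun a => qq a * x ^ a - z * (qq (S a) * x ^ a)))
      by (intros b _; rewrite (Hqq b); ring).
    rewrite csum_minus, csum_mult_l, (csum_Sl (fun a => qq a * x ^ a)).
    change (csum (fun a => qq (S a) * x ^ a) (S (S d)))
      with (csum (fun a => qq (S a) * x ^ a) (S d) + qq (S (S d)) * x ^ (S d)).
    replace (qq (S (S d))) with (RtoC 0)
      by (unfold qq; replace (S (S d) - S (S d))%nat with 0%nat by lia; reflexivity).
    rewrite (csum_ext (fun a => qq (S a) * x ^ S a) (fun a => x * (qq (S a) * x ^ a)))
      by (intros; cbn; ring).
    rewrite csum_mult_l. cbn [Cpow]. ring.
Qed.

Lemma poly_eq0_of_roots (z : nat -> C) d :
  (forall i j, (i <= d)%nat -> (j <= d)%nat -> z i = z j -> i = j) ->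
  forall p, deg_le d p -> (forall k, (k <= d)%nat -> peval p (S d) (z k) = 0) -> forall a, p a = 0.
Proof.
  induction d as [|d IH]; intros Hz p Hd Hr.
  - intros [|a]; [|apply Hd; lia].
    specialize (Hr 0%nat (le_n 0)). unfold peval in Hr. cbn in Hr. rewrite <- Hr. ring.
  - destruct (horner_division d p (z (S d)) Hd) as [q [r [Hqd [Hp0 [HpS Hev]]]]].
    assert (Hr0 : r = 0).
    { specialize (Hr (S d) (le_n _)). rewrite Hev in Hr. rewrite <- Hr. ring. }
    assert (Hq : forall a, q a = 0).
    { apply (IH (fun i j Hi Hj => Hz i j ltac:(lia) ltac:(lia)) q Hqd).
      intros k Hk. specialize (Hr k ltac:(lia)). rewrite Hev, Hr0, Cplus_0_l in Hr.
      assert (Hne : z k - z (S d) <> 0).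
      { intros E. assert (k = S d) by (apply Hz; [lia | lia |]; rewrite <- (Cplus_0_l (z (S d))), <- E; ring).
        lia. }
      replace (peval q (S d) (z k)) with (/ (z k - z (S d)) * ((z k - z (S d)) * peval q (S d) (z k)))
        by (field; exact Hne).
      rewrite Hr. ring. }
    intros [|a]; [rewrite Hp0, Hr0, Hq | rewrite HpS, !Hq]; ring.
Qed.

End Horner.

Lemma Re_wsum_pos t (g : nat -> C) j :
  bounded g -> (forall k, 0 <= Re (g k)) -> 0 < Re (g j) -> 0 < Re (wsum t g).
Proof.
  intros Hb Hnn Hj. unfold wsum, Re at 1. cbn.
  apply Rlt_le_trans with (weight j t * Re (g j)); [apply Rmult_lt_0_compat; auto using weight_pos|].
  apply (Series_ge_term (fun k => weight k t * Re (g k))); [|apply ex_series_weight_Re, Hb].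
  intros k. apply Rmult_le_pos; [apply Rlt_le, weight_pos | apply Hnn].
Qed.

Lemma Re_div_mass t (w : C) : Re (w / mass t)%C = Re w / Series (fun k => weight k t).
Proof.
  rewrite mass_real. pose proof (mass_pos t). destruct w as [u v].
  unfold Cdiv, Cinv, Cmult, Re, Im; cbn. field. lra.
Qed.

Lemma bounded_peval p n : bounded (fun k => peval p n (node k)).
Proof.
  apply bounded_csum. intros a. apply bounded_mult; [apply bounded_const|].
  exists 1. intros k. rewrite Cmod_pow, Cmod_node, pow1. lra.
Qed.

Lemma inner_moment t d p :
  inner (moment t) d p p
  = (wsum t (fun k => peval p (S d) (node k) * Cconj (peval p (S d) (node k))) / mass t)%C.
Proof.
  rewrite (wsum_ext t _
    (fun k => csum (fun b => csum (fun a => Cconj (p b) * p a * node_mono a b k) (S d)) (S d))%C).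
  2:{ intros k. unfold peval. rewrite <- csum_conj, csum_mult. apply csum_ext; intros b _.
      apply csum_ext; intros a _. unfold node_mono. rewrite Cmult_conj, Cpow_conj. ring. }
  rewrite wsum_csum.
  2:{ intros b. apply bounded_csum. intros a.
      apply bounded_mult; [apply bounded_const | apply bounded_node_mono]. }
  unfold inner, Cdiv. rewrite Cmult_comm, <- csum_mult_l. apply csum_ext. intros b _.
  rewrite wsum_csum by (intros a; apply bounded_mult; [apply bounded_const | apply bounded_node_mono]).
  unfold inner_pow. rewrite <- !csum_mult_l. apply csum_ext. intros a _.
  rewrite wsum_scal by apply bounded_node_mono. unfold moment, Cdiv. ring.
Qed.

Lemma moment_positive_definite t : positive_definite (moment t).
Proof.
  intros d p Hd [a Ha].
  assert (Hk : exists k, (k <= d)%nat /\ peval p (S d) (node k) <> RtoC 0).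
  { apply NNPP. intros Hn. apply Ha, (poly_eq0_of_roots node d); auto.
    - intros i j _ _. apply node_inj.
    - intros k Hk. apply NNPP. intros Hne. apply Hn. exists k. auto. }
  destruct Hk as [k [_ Hk]].
  rewrite inner_moment, Re_div_mass. apply Rdiv_lt_0_compat; [|apply mass_pos].
  apply (Re_wsum_pos _ _ k).
  - apply bounded_mult; [|apply bounded_conj]; apply bounded_peval.
  - intros j. rewrite <- Cmod2_conj. apply pow2_ge_0.
  - rewrite <- Cmod2_conj. apply pow_lt, Cmod_gt_0, Hk.
Qed.

(** * Oscillation of the first Verblunsky coefficient *)

(* At time 10·2^j the weights decay geometrically, with ratio e^-5, away from the index j. *)
Definition peak_time (j : nat) : R := 10 * 2 ^ j.

Lemma exp_m5_le : 0 < exp (-5) <= 1 / 32.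
Proof.
  split; [apply exp_pos|].
  replace (-5) with (-1 * INR 5) by (cbn; ring). rewrite exp_mult_INR.
  pose proof (exp_ineq1_le 1). pose proof (exp_pos (-1)).
  assert (exp 1 * exp (-1) = 1) by (rewrite <- exp_plus, Rplus_opp_r; apply exp_0).
  replace (1 / 32) with ((1 / 2) ^ 5) by (cbn; field).
  apply pow_incr. nra.
Qed.

Lemma pow2_ge_succ m : 1 + INR m <= 2 ^ m.
Proof. induction m; [cbn; lra|]. rewrite S_INR. cbn [pow]. pose proof (pos_INR m). lra. Qed.

Lemma pow2_half k : 2 ^ k * (/ 2) ^ k = 1.
Proof. rewrite <- Rpow_mult_distr, Rinv_r, pow1 by lra. reflexivity. Qed.

Lemma weight_after_peak j m : weight (j + m) (peak_time j) <= weight j (peak_time j) * exp (-5) ^ m.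
Proof.
  unfold weight, peak_time, node_cos. rewrite <- exp_mult_INR, <- exp_plus. apply exp_le_compat.
  rewrite plus_INR, pow_add.
  replace (-15 * (INR j + INR m) - 2 * (10 * 2 ^ j) * ((/ 2) ^ j * (/ 2) ^ m))
    with (-15 * (INR j + INR m) - 20 * (2 ^ j * (/ 2) ^ j) * (/ 2) ^ m) by ring.
  replace (-15 * INR j - 2 * (10 * 2 ^ j) * (/ 2) ^ j + -5 * INR m)
    with (-15 * INR j - 20 * (2 ^ j * (/ 2) ^ j) + -5 * INR m) by ring.
  rewrite pow2_half.
  destruct m as [|[|m]]; [cbn [INR pow]; lra | cbn [INR pow]; lra |].
  rewrite !S_INR. cbn [pow]. pose proof (pow_le (/ 2) m ltac:(lra)). pose proof (pos_INR m). nra.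
Qed.

Lemma weight_before_peak k m :
  weight k (peak_time (k + S m)) <= weight (k + S m) (peak_time (k + S m)) * exp (-5) ^ S m.
Proof.
  unfold weight, peak_time, node_cos. rewrite <- exp_mult_INR, <- exp_plus. apply exp_le_compat.
  rewrite plus_INR, !pow_add.
  replace (-15 * INR k - 2 * (10 * (2 ^ k * 2 ^ S m)) * (/ 2) ^ k)
    with (-15 * INR k - 20 * (2 ^ k * (/ 2) ^ k) * 2 ^ S m) by ring.
  replace (-15 * (INR k + INR (S m)) - 2 * (10 * (2 ^ k * 2 ^ S m)) * ((/ 2) ^ k * (/ 2) ^ S m)
           + -5 * INR (S m))
    with (-15 * (INR k + INR (S m)) - 20 * (2 ^ k * (/ 2) ^ k) * (2 ^ S m * (/ 2) ^ S m)
          + -5 * INR (S m)) by ring.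
  rewrite !pow2_half. pose proof (pow2_ge_succ (S m)). rewrite S_INR in *. lra.
Qed.

Lemma sum_geom_le q i : 0 <= q < 1 -> sum_f_R0 (fun k => q ^ (S i - k)) i <= q / (1 - q).
Proof.
  intros Hq. induction i.
  - cbn. apply Rmult_le_reg_r with (1 - q); [lra|]. field_simplify; nra.
  - rewrite tech5. replace (S (S i) - S i)%nat with 1%nat by lia.
    rewrite (sum_eq _ (fun k => q ^ (S i - k) * q))
      by (intros k Hk; replace (S (S i) - k)%nat with (S (S i - k)) by lia; cbn; ring).
    rewrite <- scal_sum, pow_1.
    assert (sum_f_R0 (fun k => q ^ (S i - k)) i * q <= q / (1 - q) * q) by (apply Rmult_le_compat_r; lra).
    assert (q / (1 - q) * q + q = q / (1 - q)) by (field; lra).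
    lra.
Qed.

Lemma mass_at_peak_le j : (0 < j)%nat ->
  Series (fun k => weight k (peak_time j)) <= weight j (peak_time j) * ((1 + exp (-5)) / (1 - exp (-5))).
Proof.
  intros Hj. pose proof exp_m5_le as Hq. set (q := exp (-5)) in *.
  rewrite (Series_incr_n _ j Hj (ex_series_weight_mass _)).
  destruct j as [|i]; [lia|]. cbn [pred].
  set (w := weight (S i) (peak_time (S i))).
  assert (Htail : Series (fun k => weight (S i + k) (peak_time (S i))) <= w * / (1 - q)).
  { rewrite <- (Series_geom q) by (rewrite Rabs_right; lra). rewrite <- Series_scal_l.
    apply Series_le; [intros m; split; [apply Rlt_le, weight_pos | apply weight_after_peak]|].
    apply ex_series_Rscal, ex_series_geom. rewrite Rabs_right; lra. }
  assert (Hhead : sum_f_R0 (fun k => weight k (peak_time (S i))) i <= w * (q / (1 - q))).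
  { apply Rle_trans with (sum_f_R0 (fun k => w * q ^ (S i - k)) i).
    - apply sum_Rle. intros k Hk. pose proof (weight_before_peak k (i - k)) as H.
      replace (k + S (i - k))%nat with (S i) in H by lia.
      replace (S i - k)%nat with (S (i - k)) by lia. exact H.
    - rewrite (sum_eq _ (fun k => q ^ (S i - k) * w)) by (intros; ring).
      rewrite <- scal_sum. apply Rmult_le_compat_l; [apply Rlt_le, weight_pos|].
      apply sum_geom_le. lra. }
  replace (w * ((1 + q) / (1 - q))) with (w * (q / (1 - q)) + w * / (1 - q)) by (field; lra).
  lra.
Qed.

Lemma szego_coef_0 T : T 0%nat 0%nat = RtoC 1 -> szego_coef T 0 = T 1%nat 0%nat.
Proof.
  intros H. unfold szego_coef, opuc_norm2, inner_pow. cbn. unfold poly1. cbn. rewrite H.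
  match goal with |- ?x = ?y => change (@eq C x y) end.
  field.
Qed.

Lemma Im_verblunsky_moment_0 t :
  Im (verblunsky (moment t) 0)
  = - Series (fun k => weight k t * ((-1) ^ k * node_sin k)) / Series (fun k => weight k t).
Proof.
  unfold verblunsky. rewrite szego_coef_0 by apply moment_0_0.
  rewrite im_conj. unfold moment. rewrite mass_real.
  pose proof (mass_pos t).
  assert (HI : Im (wsum t (node_mono 1 0)) = Series (fun k => weight k t * ((-1) ^ k * node_sin k))).
  { unfold wsum, Im. cbn. apply Series_ext. intros k. unfold node_mono, node. cbn. ring. }
  rewrite <- HI. destruct (wsum t (node_mono 1 0)) as [u v].
  unfold Cdiv, Cinv, Cmult, Im. cbn. field. lra.
Qed.

Lemma node_sin_bounds k : 0 <= node_sin k <= 1.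
Proof.
  pose proof (node_sin_sq k). pose proof (node_cos_pos k).
  assert (0 <= node_sin k) by apply sqrt_pos. split; nra.
Qed.

Lemma node_sin_ge j : (0 < j)%nat -> 4 / 5 <= node_sin j.
Proof.
  intros Hj. pose proof (node_sin_sq j). pose proof (node_sin_bounds j).
  assert (node_cos j <= 1 / 2).
  { destruct j as [|j]; [lia|]. pose proof (node_cos_le1 j). unfold node_cos in *. cbn. lra. }
  pose proof (node_cos_pos j). nra.
Qed.

Lemma neg1_pow_cases k : (-1) ^ k = 1 \/ (-1) ^ k = -1.
Proof. induction k as [|k [IH|IH]]; cbn; [left | right | left]; try rewrite IH; ring. Qed.

Lemma signed_sum_ge_term t j :
  weight j t * (node_sin j + 1)
  <= (-1) ^ j * Series (fun k => weight k t * ((-1) ^ k * node_sin k)) + Series (fun k => weight k t).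
Proof.
  assert (HN : ex_series (fun k => weight k t * ((-1) ^ k * node_sin k))).
  { apply (ex_series_weight _ 1). intros k. rewrite Rabs_mult, pow_1_abs.
    pose proof (node_sin_bounds k). rewrite Rabs_right; lra. }
  rewrite <- Series_scal_l, <- Series_plus by auto using ex_series_Rscal, ex_series_weight_mass.
  replace (weight j t * (node_sin j + 1))
    with ((-1) ^ j * (weight j t * ((-1) ^ j * node_sin j)) + weight j t)
    by (replace ((-1) ^ j * (weight j t * ((-1) ^ j * node_sin j)))
          with (((-1) ^ j) ^ 2 * (weight j t * node_sin j)) by ring;
        rewrite neg1_pow_sq; ring).
  apply (Series_ge_term (fun k => (-1) ^ j * (weight k t * ((-1) ^ k * node_sin k)) + weight k t));
    [| auto using ex_series_Rplus, ex_series_Rscal, ex_series_weight_mass].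
  intros k. pose proof (weight_pos k t). pose proof (node_sin_bounds k).
  destruct (neg1_pow_cases k) as [-> | ->], (neg1_pow_cases j) as [-> | ->]; nra.
Qed.

(* At the peak the mass is at most 33/31 times the peak weight, so the dominant node ζ_j, whose
   imaginary part has sign (-1)^j, forces Im α_0 to have sign -(-1)^j. *)
Lemma verblunsky_0_at_peak j :
  (0 < j)%nat -> (-1) ^ j * Im (verblunsky (moment (peak_time j)) 0) <= - 1 / 2.
Proof.
  intros Hj. rewrite Im_verblunsky_moment_0. set (t := peak_time j).
  set (Z := Series (fun k => weight k t)).
  set (N := Series (fun k => weight k t * ((-1) ^ k * node_sin k))).
  pose proof (signed_sum_ge_term t j) as Hpeak. fold N Z in Hpeak.
  pose proof (mass_at_peak_le j Hj) as Hmass. fold t Z in Hmass.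
  pose proof exp_m5_le. pose proof (node_sin_ge j Hj). pose proof (weight_pos j t).
  pose proof (mass_pos t) as HZ. fold Z in HZ.
  assert ((1 + exp (-5)) / (1 - exp (-5)) <= 33 / 31)
    by (apply Rmult_le_reg_r with (1 - exp (-5)); [lra | field_simplify; lra]).
  assert (Z <= weight j t * (33 / 31)) by (eapply Rle_trans; [apply Hmass | apply Rmult_le_compat_l; lra]).
  replace ((-1) ^ j * (- N / Z)) with (- ((-1) ^ j * N) / Z) by (field; lra).
  apply Rmult_le_reg_r with Z; [exact HZ|]. field_simplify; [nra | lra].
Qed.

(** * Uniqueness of solutions of the Schur flow *)

Lemma le_by_derivative (g h g' h' : R -> R) t : 0 <= t ->
  (forall s, is_derive g s (g' s)) -> (forall s, is_derive h s (h' s)) ->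
  (forall s, 0 <= s <= t -> g' s <= h' s) -> g 0 <= h 0 -> g t <= h t.
Proof.
  intros Ht Hg Hh Hle H0. destruct (Req_dec t 0) as [->|Hne]; [exact H0|].
  destruct (MVT_cor2 (fun s => h s - g s) (fun s => h' s - g' s) 0 t) as [c [Hc1 Hc2]]; [lra| |].
  - intros c Hc. apply is_derive_Reals, (is_derive_minus _ _ c _ _ (Hh c) (Hg c)).
  - specialize (Hle c ltac:(lra)). assert (0 <= (h' c - g' c) * (t - 0)) by (apply Rmult_le_pos; lra).
    lra.
Qed.

Lemma Rabs_le_by_derivative (g g' h h' : R -> R) t : 0 <= t ->
  (forall s, is_derive g s (g' s)) -> (forall s, is_derive h s (h' s)) ->
  (forall s, 0 <= s <= t -> Rabs (g' s) <= h' s) -> g 0 = 0 -> h 0 = 0 -> Rabs (g t) <= h t.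
Proof.
  intros Ht Hg Hh Hle Hg0 Hh0. apply Rabs_le. split.
  - enough (- g t <= h t) by lra.
    apply (le_by_derivative (fun s => - g s) h (fun s => - g' s) h' t Ht);
      [intros s; apply (is_derive_opp _ s _ (Hg s)) | exact Hh | | lra].
    intros s Hs. specialize (Hle s Hs). rewrite <- Rabs_Ropp in Hle.
    eapply Rle_trans; [apply Rle_abs | exact Hle].
  - apply (le_by_derivative g h g' h' t Ht Hg Hh); [|lra].
    intros s Hs. specialize (Hle s Hs). eapply Rle_trans; [apply Rle_abs | exact Hle].
Qed.

Lemma Cmod_le_Re_Im (z : C) : Cmod z <= Rabs (Re z) + Rabs (Im z).
Proof.
  destruct z as [a b]. unfold Cmod, Re, Im; simpl.
  pose proof (Rabs_pos a). pose proof (Rabs_pos b).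
  rewrite <- (sqrt_Rsqr (Rabs a + Rabs b)) by lra.
  apply sqrt_le_1_alt. unfold Rsqr.
  replace (a * (a * 1) + b * (b * 1)) with (Rabs a * Rabs a + Rabs b * Rabs b)
    by (rewrite <- !Rabs_mult, !Rabs_right by nra; ring).
  nra.
Qed.

Lemma Cmod_le_by_derivative (f Df : R -> C) (h h' : R -> R) t : 0 <= t ->
  (forall s, is_derive f s (Df s)) -> (forall s, is_derive h s (h' s)) ->
  (forall s, 0 <= s <= t -> Cmod (Df s) <= h' s) -> f 0 = RtoC 0 -> h 0 = 0 ->
  Cmod (f t) <= 2 * h t.
Proof.
  intros Ht Hf Hh Hle Hf0 Hh0.
  assert (HRe : Rabs (Re (f t)) <= h t).
  { apply (Rabs_le_by_derivative (fun s => Re (f s)) (fun s => Re (Df s)) h h' t Ht); auto.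
    - intros s. apply is_derive_Re, Hf.
    - intros s Hs. eapply Rle_trans; [apply re_le_Cmod | auto].
    - rewrite Hf0. reflexivity. }
  assert (HIm : Rabs (Im (f t)) <= h t).
  { apply (Rabs_le_by_derivative (fun s => Im (f s)) (fun s => Im (Df s)) h h' t Ht); auto.
    - intros s. apply is_derive_Im, Hf.
    - intros s Hs. eapply Rle_trans; [apply im_le_Cmod | auto].
    - rewrite Hf0. reflexivity. }
  pose proof (Cmod_le_Re_Im (f t)). lra.
Qed.

Definition schur_field (x y z : C) : C := (RtoC (1 - Cmod y ^ 2) * (z - x))%C.

Lemma Cmod_sub_le (x y : C) : Cmod (x - y)%C <= Cmod x + Cmod y.
Proof. unfold Cminus. eapply Rle_trans; [apply Cmod_triangle | rewrite Cmod_opp; lra]. Qed.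

Lemma Rabs_Cmod_sub (x y : C) : Rabs (Cmod x - Cmod y) <= Cmod (x - y)%C.
Proof.
  apply Rabs_le. split.
  - pose proof (Cmod_triangle (y - x)%C x) as H.
    replace (y - x + x)%C with y in H by ring.
    replace (y - x)%C with (- (x - y))%C in H by ring. rewrite Cmod_opp in H. lra.
  - pose proof (Cmod_triangle (x - y)%C y) as H. replace (x - y + y)%C with x in H by ring. lra.
Qed.

Lemma schur_field_lipschitz x y z x' y' z' :
  Cmod y < 1 -> Cmod y' < 1 -> Cmod z' < 1 -> Cmod x' <= 1 ->
  Cmod (schur_field x y z - schur_field x' y' z')%C
  <= Cmod (x - x')%C + 4 * Cmod (y - y')%C + Cmod (z - z')%C.
Proof.
  intros Hy Hy' Hz' Hx'. unfold schur_field.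
  replace (RtoC (1 - Cmod y ^ 2) * (z - x) - RtoC (1 - Cmod y' ^ 2) * (z' - x'))%C
    with (RtoC (1 - Cmod y ^ 2) * ((z - z') - (x - x')) + RtoC (Cmod y' ^ 2 - Cmod y ^ 2) * (z' - x'))%C
    by (apply injective_projections; cbn; ring).
  eapply Rle_trans; [apply Cmod_triangle|]. rewrite !Cmod_mult, !Cmod_R.
  pose proof (Cmod_ge_0 y). pose proof (Cmod_ge_0 y').
  assert (A1 : Rabs (1 - Cmod y ^ 2) <= 1) by (rewrite Rabs_right; nra).
  pose proof (Cmod_sub_le (z - z') (x - x')) as A2.
  assert (A3 : Rabs (Cmod y' ^ 2 - Cmod y ^ 2) <= 2 * Cmod (y - y')).
  { replace (Cmod y' ^ 2 - Cmod y ^ 2) with ((Cmod y' + Cmod y) * (Cmod y' - Cmod y)) by ring.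
    rewrite Rabs_mult, (Rabs_right (Cmod y' + Cmod y)) by lra.
    rewrite <- Rabs_Ropp, Ropp_minus_distr. pose proof (Rabs_Cmod_sub y y').
    pose proof (Rabs_pos (Cmod y - Cmod y')). nra. }
  pose proof (Cmod_sub_le z' x') as A4.
  pose proof (Cmod_ge_0 (z - z' - (x - x'))%C). pose proof (Cmod_ge_0 (y - y')%C).
  pose proof (Cmod_ge_0 (z' - x')%C). pose proof (Rabs_pos (1 - Cmod y ^ 2)).
  pose proof (Rabs_pos (Cmod y' ^ 2 - Cmod y ^ 2)).
  assert (Rabs (1 - Cmod y ^ 2) * Cmod (z - z' - (x - x')) <= Cmod (z - z') + Cmod (x - x')) by nra.
  assert (Rabs (Cmod y' ^ 2 - Cmod y ^ 2) * Cmod (z' - x') <= 2 * Cmod (y - y') * 2) by nra.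
  lra.
Qed.

Lemma is_derive_picard_bound k s :
  is_derive (fun s => (12 * s) ^ S k / INR (Factorial.fact (S k))) s
    (12 * ((12 * s) ^ k / INR (Factorial.fact k))).
Proof.
  auto_derive; [exact I|].
  change (match k with 0%nat => 1 | S _ => INR k + 1 end) with (INR (S k)).
  replace (INR (Factorial.fact k + k * Factorial.fact k)) with (INR (S k) * INR (Factorial.fact k))
    by (rewrite <- mult_INR; reflexivity).
  rewrite S_INR.
  pose proof (INR_fact_neq_0 k). pose proof (pos_INR k). field. split; lra.
Qed.

Lemma alpha_prev_le1 (a : nat -> R -> C) n t :
  (forall m s, Cmod (a m s) < 1) -> Cmod (alpha_prev a n t) <= 1.
Proof.
  intros H. destruct n; cbn; [rewrite Cmod_R, Rabs_left by lra; lra | apply Rlt_le, H].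
Qed.

Lemma schur_flow_picard_bound a0 (a b : nat -> R -> C) :
  schur_flow_solution a0 a -> schur_flow_solution a0 b ->
  forall k n t, 0 <= t -> Cmod (a n t - b n t)%C <= 2 * ((12 * t) ^ k / INR (Factorial.fact k)).
Proof.
  intros [Da [Ia Ha]] [Db [Ib Hb]]. unfold in_disk in *.
  induction k as [|k IH]; intros n t Ht.
  - cbn. rewrite Rdiv_1_r. pose proof (Cmod_sub_le (a n t) (b n t)).
    specialize (Da n t). specialize (Db n t). lra.
  - assert (Hc : forall s, 0 <= s -> 0 <= (12 * s) ^ k / INR (Factorial.fact k)).
    { intros s Hs. apply Rdiv_le_0_compat; [apply pow_le; lra | apply INR_fact_lt_0]. }
    assert (Hprev : forall s, 0 <= s ->
      Cmod (alpha_prev a n s - alpha_prev b n s)%C <= 2 * ((12 * s) ^ k / INR (Factorial.fact k))).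
    { intros s Hs. destruct n; cbn [alpha_prev]; [|apply IH, Hs].
      replace (RtoC (-1) - RtoC (-1))%C with (RtoC 0) by ring.
      rewrite Cmod_0. specialize (Hc s Hs). lra. }
    apply (Cmod_le_by_derivative (fun s => a n s - b n s)%C
      (fun s => schur_field (alpha_prev a n s) (a n s) (a (S n) s)
                - schur_field (alpha_prev b n s) (b n s) (b (S n) s))%C
      (fun s => (12 * s) ^ S k / INR (Factorial.fact (S k)))
      (fun s => 12 * ((12 * s) ^ k / INR (Factorial.fact k))) t Ht).
    + intros s. apply is_derive_Cminus; [apply Ha | apply Hb].
    + intros s. apply is_derive_picard_bound.
    + intros s [Hs _]. eapply Rle_trans; [apply schur_field_lipschitz; auto using alpha_prev_le1, Rlt_le|].
      pose proof (Hprev s Hs). pose proof (IH n s Hs). pose proof (IH (S n) s Hs). lra.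
    + rewrite Ia, Ib. ring.
    + cbv beta. rewrite Rmult_0_r, pow_i by lia. unfold Rdiv. ring.
Qed.

Lemma schur_flow_unique a0 (a b : nat -> R -> C) :
  schur_flow_solution a0 a -> schur_flow_solution a0 b -> forall n t, 0 <= t -> a n t = b n t.
Proof.
  intros Ha Hb n t Ht.
  assert (Z : Cmod (a n t - b n t)%C = 0).
  { apply Rle_antisym; [|apply Cmod_ge_0]. apply Rnot_lt_le. intros Hpos.
    destruct (cv_speed_pow_fact (12 * t) (Cmod (a n t - b n t)%C / 4)) as [N HN]; [lra|].
    specialize (HN N (le_n _)). unfold Rdist in HN. rewrite Rminus_0_r in HN.
    pose proof (schur_flow_picard_bound a0 a b Ha Hb N n t Ht).
    pose proof (Rle_abs ((12 * t) ^ N / INR (Factorial.fact N))). lra. }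
  apply Cmod_eq_0 in Z. rewrite <- (Cplus_0_l (b n t)), <- Z. ring.
Qed.

Lemma not_filterlim_alternating (f : R -> C) (t : nat -> R) :
  (forall M, exists N, forall j, (N <= j)%nat -> M < t j) ->
  (forall j, (0 < j)%nat -> (-1) ^ j * Im (f (t j)) <= - 1 / 2) ->
  ~ (exists l, filterlim f (Rbar_locally p_infty) (locally l)).
Proof.
  intros Hunb Hosc [l Hl].
  pose proof (proj1 (@filterlim_locally R C_UniformSpace _
    (@filter_filter _ _ (Rbar_locally_filter p_infty)) f l) Hl) as Hball.
  destruct (Hball (mkposreal (1 / 4) ltac:(lra))) as [M HM].
  destruct (Hunb M) as [N HN].
  assert (Hnear : forall j, (N <= j)%nat -> Rabs (Im (f (t j)) - Im l) < 1 / 4)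
    by (intros j Hj; apply (HM _ (HN j Hj))).
  pose proof (Hnear (2 * S N)%nat ltac:(lia)) as B1.
  pose proof (Hnear (S (2 * S N)) ltac:(lia)) as B2.
  pose proof (Hosc (2 * S N)%nat ltac:(lia)) as C1. pose proof (Hosc (S (2 * S N)) ltac:(lia)) as C2.
  rewrite pow_1_even in C1. rewrite pow_1_odd in C2.
  apply Rabs_lt_between in B1. apply Rabs_lt_between in B2. lra.
Qed.

Lemma peak_time_unbounded M : exists N, forall j, (N <= j)%nat -> M < peak_time j.
Proof.
  destruct (INR_archimed 1 M ltac:(lra)) as [N HN]. rewrite Rmult_1_r in HN.
  exists N. intros j Hj. apply le_INR in Hj. pose proof (pow2_ge_succ j). pose proof (pos_INR N).
  unfold peak_time. lra.
Qed.

Definition schur_solution (n : nat) (t : R) : C := verblunsky (moment t) n.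

Lemma schur_solution_spec : schur_flow_solution (fun n => schur_solution n 0) schur_solution.
Proof.
  split; [|split].
  - intros n t. apply verblunsky_lt1; auto using moment_toeplitz, moment_hermitian, moment_positive_definite.
  - reflexivity.
  - intros n t. apply (is_derive_verblunsky moment); auto using moment_toeplitz, moment_hermitian,
      moment_positive_definite, moment_flow_law.
Qed.

Theorem proposition1p3 :
  exists a0 : nat -> C,
    (forall n, in_disk (a0 n)) /\
    (exists a : nat -> R -> C, schur_flow_solution a0 a) /\
    (forall a : nat -> R -> C, schur_flow_solution a0 a ->
       ~ (exists l : C, filterlim (a 0%nat) (Rbar_locally p_infty) (locally l))).
Proof.
  exists (fun n => schur_solution n 0). split; [|split].
  - intros n. apply schur_solution_spec.
  - exists schur_solution. apply schur_solution_spec.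
  - intros a Ha. apply (not_filterlim_alternating _ peak_time peak_time_unbounded).
    intros j Hj.
    rewrite (schur_flow_unique _ a schur_solution Ha schur_solution_spec 0 (peak_time j))
      by (unfold peak_time; pose proof (pow_lt 2 j); lra).
    apply verblunsky_0_at_peak, Hj.
Qed.
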